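(* Let $G$ be a flat affine group scheme over $R$ and $N\to G$ the automatic blowup of the identity. Then for every $n\ge0$ the group scheme $N\otimes_RR_n$ over $R_n$ is trivial, i.e. isomorphic to $\mathrm{Spec}\,R_n$. Conversely, if $\rho:\mathcal G\to G$ is a morphism of flat affine group schemes over $R$ inducing an isomorphism on generic fibres and such that $\mathcal G\otimes_RR_n$ is trivial for all $n\ge0$, then $R[\mathcal G]=R[N]$ as subrings of $K[G]$, i.e. $\rho$ is the automatic blowup of the identity.
   Context: $R$ is a discrete valuation ring with uniformizer $\pi$, fraction field $K$, residue field $k$; $R_n=R/(\pi^{n+1})$; $R[G]\subset K[G]$ for flat $G$. The Neron blowup of a flat affine group scheme $H$ at a closed subgroup of $H\otimes k$ with ideal $J\subset R[H]$ (inverse image of its ideal) is $\mathrm{Spec}$ of the subring of $K[H]$ generated by $R[H]$ and $\pi^{-1}J$. The automatic blowup of the identity $N\to G$ is the limit of $\cdots\to G_{n+1}\to G_n\to\cdots\to G_0=G$, where $G_{n+1}\to G_n$ is the Neron blowup of $G_n$ at $\{e\}\subset G_n\otimes k$. *)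

From HB Require Import structures.
From mathcomp Require Import all_boot all_order all_algebra.
Set Implicit Arguments. Unset Strict Implicit. Unset Printing Implicit Defensive.
Import GRing.Theory.
Local Open Scope ring_scope.

Notation "x %:F" := (@FracField.tofrac _ x).

(* Discrete valuation rings: a domain R with a uniformizer pi, i.e. pi is a  *)
(* nonzero non-unit and every nonzero x is u * pi^n with u a unit.           *)
Definition is_uniformizer (R : idomainType) (pi : R) : Prop :=
  [/\ pi != 0, pi \isn't a GRing.unit &
      forall x : R, x != 0 -> exists (u : R) (n : nat),
          u \is a GRing.unit /\ x = u * pi ^+ n].

Section Schemes.
Variable R : idomainType.
Local Notation K := {fraction R}.

Definition alg_hom (A B : comAlgType K) (f : A -> B) : Prop :=
  [/\ forall (k : K) (x y : A), f (k *: x + y) = k *: f x + f y,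
      f 1 = 1 & forall x y : A, f (x * y) = f x * f y].

Definition alg_hom_K (A : comAlgType K) (e : A -> K) : Prop :=
  [/\ forall (k : K) (x y : A), e (k *: x + y) = k * e x + e y,
      e 1 = 1 & forall x y : A, e (x * y) = e x * e y].

(* A2 with p1, p2 is A (x)_K A: the coproduct of two copies of A in the     *)
(* category of commutative K-algebras.                                      *)
Definition is_tensor2 (A A2 : comAlgType K) (p1 p2 : A -> A2) : Prop :=
  [/\ alg_hom p1, alg_hom p2 &
      forall (B : comAlgType K) (f g : A -> B), alg_hom f -> alg_hom g ->
        (exists h : A2 -> B, [/\ alg_hom h, forall a, h (p1 a) = f a
                                          & forall a, h (p2 a) = g a]) /\
        (forall h h' : A2 -> B, alg_hom h -> alg_hom h' ->
           (forall a, h (p1 a) = f a) -> (forall a, h (p2 a) = g a) ->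
           (forall a, h' (p1 a) = f a) -> (forall a, h' (p2 a) = g a) ->
           forall x, h x = h' x)].

(* A3 with q1, q2, q3 is A (x)_K A (x)_K A. *)
Definition is_tensor3 (A A3 : comAlgType K) (q1 q2 q3 : A -> A3) : Prop :=
  [/\ alg_hom q1, alg_hom q2, alg_hom q3 &
      forall (B : comAlgType K) (f g k : A -> B),
        alg_hom f -> alg_hom g -> alg_hom k ->
        (exists h : A3 -> B, [/\ alg_hom h, forall a, h (q1 a) = f a,
                     forall a, h (q2 a) = g a & forall a, h (q3 a) = k a]) /\
        (forall h h' : A3 -> B, alg_hom h -> alg_hom h' ->
           (forall a, h (q1 a) = f a) -> (forall a, h (q2 a) = g a) ->
           (forall a, h (q3 a) = k a) ->
           (forall a, h' (q1 a) = f a) -> (forall a, h' (q2 a) = g a) ->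
           (forall a, h' (q3 a) = k a) ->
           forall x, h x = h' x)].

(* Commutative Hopf algebra axioms for (A, comultiplication D, counit e,    *)
(* antipode s); maps out of A (x) A are described by their values on        *)
(* p1 a = a (x) 1 and p2 a = 1 (x) a.                                        *)
Definition is_hopf (A A2 A3 : comAlgType K) (p1 p2 : A -> A2)
    (q1 q2 q3 : A -> A3) (D : A -> A2) (e : A -> K) (s : A -> A) : Prop :=
  [/\ alg_hom D /\ alg_hom_K e, alg_hom s,
      (* coassociativity: (D (x) id) o D = (id (x) D) o D *)
      (forall (u v L M : A2 -> A3),
         alg_hom u -> alg_hom v -> alg_hom L -> alg_hom M ->
         (forall a, u (p1 a) = q1 a) -> (forall a, u (p2 a) = q2 a) ->
         (forall a, v (p1 a) = q2 a) -> (forall a, v (p2 a) = q3 a) ->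
         (forall a, L (p1 a) = u (D a)) -> (forall a, L (p2 a) = q3 a) ->
         (forall a, M (p1 a) = q1 a) -> (forall a, M (p2 a) = v (D a)) ->
         forall a, L (D a) = M (D a)),
      (* counit: (e (x) id) o D = id = (id (x) e) o D *)
      (forall h : A2 -> A, alg_hom h ->
         (forall a, h (p1 a) = (e a)%:A) -> (forall a, h (p2 a) = a) ->
         forall a, h (D a) = a) /\
      (forall h : A2 -> A, alg_hom h ->
         (forall a, h (p1 a) = a) -> (forall a, h (p2 a) = (e a)%:A) ->
         forall a, h (D a) = a) &
      (* antipode: m o (s (x) id) o D = unit o e = m o (id (x) s) o D *)
      (forall h : A2 -> A, alg_hom h ->
         (forall a, h (p1 a) = s a) -> (forall a, h (p2 a) = a) ->
         forall a, h (D a) = (e a)%:A) /\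
      (forall h : A2 -> A, alg_hom h ->
         (forall a, h (p1 a) = a) -> (forall a, h (p2 a) = s a) ->
         forall a, h (D a) = (e a)%:A)].

Definition Rsubalg (A : comAlgType K) (P : A -> Prop) : Prop :=
  [/\ forall r : R, P ((r%:F)%:A),
      forall x y, P x -> P y -> P (x + y)
    & forall x y, P x -> P y -> P (x * y)].

Definition Rgen (A : comAlgType K) (X : A -> Prop) : A -> Prop :=
  fun a => forall P : A -> Prop, Rsubalg P -> (forall x, X x -> P x) -> P a.

(* S is (the coordinate ring R[G] of) a flat affine group scheme over R,     *)
(* realised inside its generic fibre K[G] = A (flat = torsion free, so      *)
(* R[G] embeds in R[G] (x)_R K = A):                                         *)
(*  - S is an R-subalgebra of A with S (x)_R K = A (S spans A over K);      *)
(*  - D(S) lies in the image of S (x)_R S in A (x)_K A, i.e. the R-subalgebra *)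
(*    generated by the a (x) 1, 1 (x) a (a in S);                             *)
Definition flat_group_scheme (A A2 : comAlgType K) (p1 p2 : A -> A2)
    (D : A -> A2) (e : A -> K) (s : A -> A) (S : A -> Prop) : Prop :=
  [/\ Rsubalg S,
      forall a : A, exists r : R, r != 0 /\ S (r%:F *: a),
      forall a, S a -> Rgen (fun x => exists2 b, S b & x = p1 b \/ x = p2 b) (D a),
      forall a, S a -> exists r : R, e a = r%:F
    & forall a, S a -> S (s a)].

(* Neron blowup of S at the identity section {e} of the special fibre:       *)
(* J = inverse image in S of the ideal of {e} in S/pi S = {x in S | e x in pi R},*)
(* and the blowup is the subring of A generated by S and pi^-1 J.            *)
Definition neron_blowup_e (A : comAlgType K) (pi : R) (e : A -> K)
    (S : A -> Prop) : A -> Prop :=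
  Rgen (fun a => S a \/
         exists2 j, S j & (exists r : R, e j = (pi * r)%:F) /\ a = (pi%:F)^-1 *: j).

(* The automatic blowup N: the limit of G_{n+1} -> G_n, i.e. R[N] is the   *)
(* union (colimit) of the increasing chain of subrings R[G_n] of A.         *)
Definition auto_blowup (A : comAlgType K) (pi : R) (e : A -> K)
    (S : A -> Prop) : A -> Prop :=
  fun a => exists n : nat, iter n (neron_blowup_e pi e) S a.

Definition in_pi_pow (A : comAlgType K) (pi : R) (n : nat) (S : A -> Prop)
    (x : A) : Prop :=
  exists2 s, S s & x = ((pi ^+ n.+1)%:F) *: s.

(* The group scheme Spec (S (x)_R R_n) = Spec (S / pi^(n+1) S) over R_n is   *)
(* trivial: the structure map R_n = R/(pi^(n+1)) -> S/pi^(n+1) S is an       *)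
(* isomorphism (surjective and injective).                                   *)
Definition trivial_mod (A : comAlgType K) (pi : R) (S : A -> Prop) (n : nat)
    : Prop :=
  (forall a, S a -> exists r : R, in_pi_pow pi n S (a - (r%:F)%:A)) /\
  (forall r : R, in_pi_pow pi n S ((r%:F)%:A) ->
     exists q : R, r = q * pi ^+ n.+1).

End Schemes.

From HB Require Import structures.
From mathcomp Require Import all_boot all_order all_algebra.
Import GRing.Theory.
Local Open Scope ring_scope.

(* Both parts come from one description of the automatic blowup: R[N] is the
   ring of all a in K[G] with e(a) in R.  Such an a differs from e(a) by an
   element x of the augmentation ideal, and since S spans K[G] some pi^k x lies
   in R[G]; each blowup step divides elements of the augmentation ideal by pi
   once, so x lies in R[G_k].  Conversely every blowup keeps e integral.  The
   ring {e in R} is visibly trivial modulo every pi^(n+1); and an S' with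
   e(S') in R that is trivial modulo pi is closed under the same division
   step, hence contains {e in R} as soon as it contains S. *)

Set Implicit Arguments.
Unset Strict Implicit.

Section CounitHom.
Variables (R : idomainType) (A : comAlgType {fraction R}).
Variables (e : A -> {fraction R}) (He : alg_hom_K e).

Lemma alg_hom_K0 : e 0 = 0.
Proof.
case: He => Hlin _ _; have := Hlin 1 0 0.
rewrite scaler0 addr0 mul1r => He0.
by apply: (@addrI _ (e 0)); rewrite addr0 -He0.
Qed.

Lemma alg_hom_KD x y : e (x + y) = e x + e y.
Proof. by case: He => Hlin _ _; rewrite -(scale1r x) Hlin mul1r scale1r. Qed.

Lemma alg_hom_KZ k x : e (k *: x) = k * e x.
Proof. by case: He => Hlin _ _; rewrite -[k *: x]addr0 Hlin alg_hom_K0 addr0. Qed.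

Lemma alg_hom_K_alg k : e k%:A = k.
Proof. by case: He => _ He1 _; rewrite alg_hom_KZ He1 mulr1. Qed.

Lemma alg_hom_KB x y : e (x - y) = e x - e y.
Proof. by rewrite -scaleN1r alg_hom_KD alg_hom_KZ mulN1r. Qed.

Lemma alg_hom_KM x y : e (x * y) = e x * e y.
Proof. by case: He. Qed.

End CounitHom.

Section RSubalgebras.
Variables (R : idomainType) (A : comAlgType {fraction R}).

Lemma Rsubalg_scale (P : A -> Prop) (r : R) x :
  Rsubalg P -> P x -> P (r%:F *: x).
Proof. by case=> Pc _ PM Px; rewrite -mulr_algl; apply: PM. Qed.

Lemma Rsubalg_sub (P : A -> Prop) x y : Rsubalg P -> P x -> P y -> P (x - y).
Proof.
move=> HP Px Py; case: (HP) => _ PD _; apply: PD => //.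
by rewrite -scaleN1r -(rmorphN1 (@FracField.tofrac R)); apply: Rsubalg_scale.
Qed.

Lemma Rsubalg_Rgen (X : A -> Prop) : Rsubalg (Rgen X).
Proof.
split=> [r P [] //|x y Hx Hy P HP HX|x y Hx Hy P HP HX]; case: (HP) => _ PD PM.
- by apply: PD; [apply: Hx | apply: Hy].
- by apply: PM; [apply: Hx | apply: Hy].
Qed.

Lemma Rgen_in (X : A -> Prop) x : X x -> Rgen X x.
Proof. by move=> Xx P _; apply. Qed.

End RSubalgebras.

Definition counit_in_R (R : idomainType) (A : comAlgType {fraction R})
    (e : A -> {fraction R}) (a : A) : Prop :=
  exists r : R, e a = r%:F.

Section CounitIntegral.
Variables (R : idomainType) (A : comAlgType {fraction R}).
Variables (pi : R) (e : A -> {fraction R}).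
Hypotheses (pi_neq0 : pi != 0) (He : alg_hom_K e).

Let piF_neq0 : pi%:F != 0. Proof. by rewrite tofrac_eq0. Qed.

Lemma Rsubalg_counit_in_R : Rsubalg (counit_in_R e).
Proof.
split=> [r|x y [r Er] [t Et]|x y [r Er] [t Et]].
- by exists r; rewrite alg_hom_K_alg.
- by exists (r + t); rewrite alg_hom_KD // Er Et tofracD.
- by exists (r * t); rewrite alg_hom_KM // Er Et tofracM.
Qed.

Lemma neron_blowup_e_counit_in_R (P : A -> Prop) :
  (forall a, P a -> counit_in_R e a) ->
  forall a, neron_blowup_e pi e P a -> counit_in_R e a.
Proof.
move=> Pe a; apply=> [|x [/Pe //|[j _ [[r Ej] ->]]]]; first exact: Rsubalg_counit_in_R.
by exists r; rewrite alg_hom_KZ // Ej tofracM mulrA mulVf ?mul1r.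
Qed.

Lemma trivial_mod_counit_in_R n : trivial_mod pi (counit_in_R e) n.
Proof.
have piXF_neq0 : (pi ^+ n.+1)%:F != 0 by rewrite tofrac_eq0 expf_neq0.
split=> [a [r Ea]|r [s [w Es] Er]].
- exists r; exists ((pi ^+ n.+1)%:F^-1 *: (a - (r%:F)%:A)).
    by exists 0; rewrite alg_hom_KZ // alg_hom_KB // Ea alg_hom_K_alg // subrr mulr0.
  by rewrite scalerA mulfV // scale1r.
- have := congr1 e Er; rewrite alg_hom_K_alg // alg_hom_KZ // Es -tofracM.
  by move/eqP; rewrite tofrac_eq => /eqP ->; exists w; rewrite mulrC.
Qed.

(* The last hypothesis is the division step of a Neron blowup at the
   identity; R[N] has it by construction, an S' trivial modulo pi by
   [trivial_mod_div_augmentation]. *)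
Lemma counit_in_R_subset (S P : A -> Prop) :
  (forall r : R, r != 0 -> exists (u : R) (k : nat),
     u \is a GRing.unit /\ r = u * pi ^+ k) ->
  (forall a, exists r : R, r != 0 /\ S (r%:F *: a)) ->
  Rsubalg P -> (forall a, S a -> P a) ->
  (forall x, P x -> e x = 0 -> P (pi%:F^-1 *: x)) ->
  forall a, counit_in_R e a -> P a.
Proof.
move=> pi_fact S_span HP SP Pdiv a [t Ea].
have [r [r_neq0 Sra]] := S_span a; have [u [k [u_unit Er]]] := pi_fact r r_neq0.
pose x := (pi ^+ k)%:F *: (a - (t%:F)%:A).
have Px : P x.
  rewrite /x scalerBr scalerA -tofracM (_ : pi ^+ k = u^-1 * r); last by rewrite Er mulKr.
  apply: Rsubalg_sub => //; last by case: HP => Pc _ _; apply: Pc.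
  by rewrite tofracM -scalerA; apply: Rsubalg_scale => //; apply: SP.
have ex : e x = 0 by rewrite alg_hom_KZ // alg_hom_KB // Ea alg_hom_K_alg // subrr mulr0.
have Pdivk : forall j, P (pi%:F^-1 ^+ j *: x) /\ e (pi%:F^-1 ^+ j *: x) = 0.
  elim=> [|j [Pj ej]]; first by rewrite scale1r.
  by rewrite exprS -scalerA alg_hom_KZ // ej mulr0; split=> //; apply: Pdiv.
have [Pak _] := Pdivk k.
rewrite /x scalerA tofracXn -exprMn mulVf // expr1n scale1r in Pak.
by rewrite -(subrK (t%:F)%:A a); case: HP => Pc PD _; apply: PD.
Qed.

End CounitIntegral.

Section AutomaticBlowup.
Variables (R : idomainType) (A : comAlgType {fraction R}).
Variables (pi : R) (e : A -> {fraction R}) (S : A -> Prop).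
Hypotheses (Hpi : is_uniformizer pi) (He : alg_hom_K e) (HS : Rsubalg S).
Hypothesis S_span : forall a : A, exists r : R, r != 0 /\ S (r%:F *: a).
Hypothesis S_counit : forall a, S a -> counit_in_R e a.

Let pi_neq0 : pi != 0. Proof. by case: Hpi. Qed.
Let pi_fact := let: And3 _ _ pi_fact := Hpi in pi_fact.

Lemma neron_blowup_e_subset (P : A -> Prop) a : P a -> neron_blowup_e pi e P a.
Proof. by move=> Pa; apply: Rgen_in; left. Qed.

Lemma iter_blowup_leq m k a :
  (m <= k)%N -> iter m (neron_blowup_e pi e) S a -> iter k (neron_blowup_e pi e) S a.
Proof.
elim: k => [|k IH]; first by rewrite leqn0 => /eqP ->.
rewrite leq_eqVlt => /orP [/eqP -> //|lt_mk] Ha.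
by rewrite iterS; apply: neron_blowup_e_subset; apply: IH.
Qed.

Lemma Rsubalg_auto_blowup : Rsubalg (auto_blowup pi e S).
Proof.
have Rsub_iter m : Rsubalg (iter m (neron_blowup_e pi e) S).
  by case: m => [|m] //=; apply: Rsubalg_Rgen.
have join m k x : iter m (neron_blowup_e pi e) S x ->
    iter (maxn m k) (neron_blowup_e pi e) S x.
  by apply: iter_blowup_leq; rewrite leq_maxl.
split=> [r|x y [m Hx] [k Hy]|x y [m Hx] [k Hy]]; first by exists 0%N; case: HS => Sc _ _; apply: Sc.
- exists (maxn m k); case: (Rsub_iter (maxn m k)) => _ PD _.
  by apply: PD; [apply: join | rewrite maxnC; apply: join].
- exists (maxn m k); case: (Rsub_iter (maxn m k)) => _ _ PM.
  by apply: PM; [apply: join | rewrite maxnC; apply: join].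
Qed.

Lemma auto_blowup_counit_in_R a : auto_blowup pi e S a -> counit_in_R e a.
Proof.
case=> m; elim: m a => [|m IH] a; first exact: S_counit.
by rewrite iterS; apply: neron_blowup_e_counit_in_R.
Qed.

Lemma auto_blowupE a : auto_blowup pi e S a <-> counit_in_R e a.
Proof.
split; first exact: auto_blowup_counit_in_R.
apply: (counit_in_R_subset pi_neq0 He pi_fact S_span Rsubalg_auto_blowup) => [b Sb|x [m Hx] ex].
  by exists 0%N.
exists m.+1; rewrite iterS; apply: Rgen_in; right.
by exists x => //; split=> //; exists 0; rewrite ex mulr0.
Qed.

Lemma trivial_mod_auto_blowup n : trivial_mod pi (auto_blowup pi e S) n.
Proof.
have [ontoR injR] := trivial_mod_counit_in_R pi_neq0 He n.
have inpi_ext x : in_pi_pow pi n (counit_in_R e) x -> in_pi_pow pi n (auto_blowup pi e S) x.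
  by case=> b /auto_blowupE Nb ->; exists b.
split=> [a /auto_blowupE /ontoR [r /inpi_ext]|r [b /auto_blowup_counit_in_R Nb Er]].
  by exists r.
by apply: injR; exists b.
Qed.

(* Writing x = c + pi s' with s' in S', e(x) = 0 forces c = - pi e(s'), so
   pi^-1 x = s' - e(s'). *)
Lemma trivial_mod_div_augmentation (S' : A -> Prop) :
  Rsubalg S' -> (forall a, S' a -> counit_in_R e a) -> trivial_mod pi S' 0 ->
  forall x, S' x -> e x = 0 -> S' (pi%:F^-1 *: x).
Proof.
move=> HS' S'_counit [ontoR _] x S'x ex.
have [c [s' S's Hc]] := ontoR x S'x; have [w Ew] := S'_counit s' S's.
rewrite expr1 in Hc; have Ex : x = (c%:F)%:A + pi%:F *: s' by rewrite -Hc addrC subrK.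
have := congr1 e Ex; rewrite ex alg_hom_KD // alg_hom_K_alg // alg_hom_KZ // Ew.
rewrite -tofracM -tofracD => /esym/eqP; rewrite tofrac_eq0 => /eqP Hc0.
have -> : pi%:F^-1 *: x = ((- w)%:F)%:A + s'.
  have Ec : c = pi * - w by rewrite mulrN; apply/eqP; rewrite -subr_eq0 opprK Hc0.
  rewrite Ex Ec scalerDr scalerA tofracM mulrA mulVf ?tofrac_eq0 // mul1r.
  by rewrite scalerA mulVf ?tofrac_eq0 // scale1r.
by case: HS' => Pc PD _; apply: PD.
Qed.

Lemma auto_blowup_unique (S' : A -> Prop) :
  Rsubalg S' -> (forall a, S' a -> counit_in_R e a) -> (forall a, S a -> S' a) ->
  trivial_mod pi S' 0 -> forall a, S' a <-> auto_blowup pi e S a.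
Proof.
move=> HS' S'_counit SS' triv a; split=> [/S'_counit/auto_blowupE //|/auto_blowupE].
apply: (counit_in_R_subset pi_neq0 He pi_fact S_span HS' SS').
exact: trivial_mod_div_augmentation.
Qed.

End AutomaticBlowup.

Theorem corollary2p23
  (R : idomainType) (pi : R) (Hpi : is_uniformizer pi)
  (A A2 A3 : comAlgType {fraction R})
  (p1 p2 : A -> A2) (q1 q2 q3 : A -> A3)
  (D : A -> A2) (e : A -> {fraction R}) (s : A -> A)
  (H2 : is_tensor2 p1 p2) (H3 : is_tensor3 q1 q2 q3)
  (Hhopf : is_hopf p1 p2 q1 q2 q3 D e s)
  (S : A -> Prop) (HS : flat_group_scheme p1 p2 D e s S) :
  (forall n : nat, trivial_mod pi (auto_blowup pi e S) n) /\
  (forall S' : A -> Prop, flat_group_scheme p1 p2 D e s S' ->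
     (forall a, S a -> S' a) ->
     (forall n : nat, trivial_mod pi S' n) ->
     forall a, S' a <-> auto_blowup pi e S a).
Proof.
case: Hhopf => [[_ He]] _ _ _ _.
case: HS => HS S_span _ S_counit _.
split=> [|S' [HS' _ _ S'_counit _] SS' triv]; first exact: trivial_mod_auto_blowup.
exact: auto_blowup_unique.
Qed.
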